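(* Let $G_1$ and $G_2$ be two vertex-disjoint simple connected graphs with $|V(G_1)|=n_1$, $|V(G_2)|=n_2$, $|E(G_1)|=m_1$, $|E(G_2)|=m_2$. Then the vertex R-join $G_1\dot{\vee}_R G_2$ satisfies \[ F(G_1\dot{\vee}_R G_2)=8F(G_1)+F(G_2)+12n_2M_1(G_1)+3n_1M_1(G_2)+12m_1n_2^{2}+6m_2n_1^{2}+n_1n_2(n_1^2+n_2^2)+8m_1 . \]
   Context: For a simple graph $G$ and $v\in V(G)$, $d_G(v)$ is the degree of $v$. The first Zagreb index is $M_1(G)=\sum_{v\in V(G)}d_G(v)^2$ and the F-index is $F(G)=\sum_{v\in V(G)}d_G(v)^3$. The graph $R(G)$ is obtained from $G$ by inserting a new vertex into each edge of $G$ and joining each new vertex to the two end vertices of the corresponding edge (so the original edges of $G$ are kept); let $I(G)$ denote the set of these new vertices, so $V(R(G))=V(G)\cup I(G)$. The vertex R-join $G_1\dot{\vee}_R G_2$ is the graph obtained from $R(G_1)$ and $G_2$ (taken vertex-disjoint) by joining each vertex of $V(G_1)$ to every vertex of $G_2$ by an edge. *)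

From mathcomp Require Import all_boot.
Set Implicit Arguments. Unset Strict Implicit. Unset Printing Implicit Defensive.

Section Graphs.
Variable T : finType.
Variable e : rel T.

Definition simple_graph : Prop := symmetric e /\ irreflexive e.
Definition connected_graph : Prop := forall x y : T, connect e x y.

Definition deg (x : T) : nat := #|[set y | e x y]|.
Definition M1 : nat := \sum_(x : T) deg x ^ 2.
Definition Findex : nat := \sum_(x : T) deg x ^ 3.
Definition edges : {set {set T}} := [set A : {set T} | [exists x, exists y, e x y && (A == [set x; y])]].
Definition edge_type : finType := {A : {set T} | A \in edges}.
End Graphs.

Section RJoin.
Variables (T1 T2 : finType) (e1 : rel T1) (e2 : rel T2).

(* vertices of G1 vR G2: V(G1) + I(G1) + V(G2) *)
Definition rjoin_vertex : finType := ((T1 + edge_type e1) + T2)%type.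

Definition rjoin_adj (u v : rjoin_vertex) : bool :=
  match u, v with
  | inl (inl x), inl (inl y) => e1 x y
  | inl (inl x), inl (inr A) => x \in val A     (* subdivision vertex joined to ends *)
  | inl (inr A), inl (inl x) => x \in val A
  | inl (inl _), inr _ => true
  | inr _, inl (inl _) => true
  | inr a, inr b => e2 a b
  | _, _ => false
  end.
End RJoin.

(** In the R-join a vertex [x] of [G1] has degree [2 d(x) + n2] (its edges in
    [G1], one subdivision vertex per incident edge, and all of [G2]), every
    subdivision vertex has degree 2, and a vertex [y] of [G2] has degree
    [d(y) + n1].  Expanding the cubes of these affine expressions and using the
    handshake lemma [sum_x d(x) = 2m] gives the formula. *)
From mathcomp Require Import all_boot.
From mathcomp Require Import zify.

Set Implicit Arguments. Unset Strict Implicit. Unset Printing Implicit Defensive.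

Lemma sum_nat_of_bool_card (T : finType) (P : pred T) : \sum_x (P x : nat) = #|P|.
Proof.
rewrite -sum1_card [RHS]big_mkcond /=.
by apply: eq_bigr => x _; rewrite unfold_in; case: (P x).
Qed.

Section SimpleGraph.
Variables (T : finType) (e : rel T).

Lemma degE x : deg e x = \sum_y (e x y : nat).
Proof. by rewrite sum_nat_of_bool_card /deg; apply: eq_card => y; rewrite inE. Qed.

Hypothesis simple_e : simple_graph e.

Lemma card_edge (A : edge_type e) : #|val A| = 2.
Proof.
case: simple_e => _ irr_e; case: A => /= A.
rewrite inE => /existsP [a /existsP [b /andP [eab /eqP ->]]].
by rewrite cards2; case: eqP => // eq_ab; rewrite eq_ab irr_e in eab.
Qed.

Lemma incident_edgesE x :
  [set A in edges e | x \in A] = [set [set x; y] | y in [set y | e x y]].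
Proof.
case: simple_e => sym_e irr_e; apply/setP => B; rewrite !inE; apply/idP/imsetP.
- case/andP => /existsP [a /existsP [b /andP [eab /eqP ->]]].
  rewrite !inE => /orP [/eqP -> | /eqP ->].
  + by exists b; rewrite ?inE.
  + by exists a; [rewrite inE sym_e | rewrite setUC].
- move=> [y]; rewrite inE => exy ->; rewrite !inE eqxx andbT.
  by apply/existsP; exists x; apply/existsP; exists y; rewrite exy eqxx.
Qed.

Lemma sum_incident_edges x : \sum_(A : edge_type e) (x \in val A : nat) = deg e x.
Proof.
case: simple_e => _ irr_e.
rewrite -(big_sub (edges e) (fun B => (x \in B) : nat)).
have -> : \sum_(B in edges e) (x \in B : nat) = #|[set A in edges e | x \in A]|.
  rewrite -sum1_card big_mkcond [RHS]big_mkcond /=; apply: eq_bigr => B _.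
  by rewrite [in RHS]in_set; case: (B \in edges e) => //; case: (x \in B).
rewrite incident_edgesE card_in_imset // => y z; rewrite !inE => exy exz eq_xy_xz.
have : y \in [set x; z] by rewrite -eq_xy_xz !inE eqxx orbT.
by rewrite !inE => /orP [/eqP eq_yx | /eqP //]; rewrite eq_yx irr_e in exy.
Qed.

Lemma handshake : \sum_x deg e x = 2 * #|edges e|.
Proof.
under eq_bigr => x _ do rewrite -sum_incident_edges.
rewrite exchange_big /=.
under eq_bigr => A _ do rewrite (sum_nat_of_bool_card (mem (val A))) card_edge.
by rewrite sum_nat_const card_sig mulnC; congr (_ * _); apply: eq_card.
Qed.

End SimpleGraph.

Section RJoinDegrees.
Variables (T1 T2 : finType) (e1 : rel T1) (e2 : rel T2).
Hypothesis simple_e1 : simple_graph e1.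

Local Notation degR := (deg (@rjoin_adj T1 T2 e1 e2)).

Lemma deg_rjoin_vertex1 x : degR (inl (inl x)) = 2 * deg e1 x + #|T2|.
Proof.
rewrite degE !big_sumType /= -degE sum_incident_edges // sum1_card.
by rewrite mul2n -addnn.
Qed.

Lemma deg_rjoin_subdivision A : degR (inl (inr A)) = 2.
Proof.
rewrite degE !big_sumType /= !big1_eq !addn0.
by rewrite (sum_nat_of_bool_card (mem (val A))) card_edge.
Qed.

Lemma deg_rjoin_vertex2 y : degR (inr y) = deg e2 y + #|T1|.
Proof. by rewrite degE !big_sumType /= -degE sum1_card big1 // addn0 addnC. Qed.

End RJoinDegrees.

Lemma sum_affine_cube (T : finType) (f : T -> nat) a b :
  \sum_x (a * f x + b) ^ 3 = a ^ 3 * \sum_x f x ^ 3 + 3 * a ^ 2 * b * \sum_x f x ^ 2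
     + 3 * a * b ^ 2 * \sum_x f x + #|T| * b ^ 3.
Proof.
rewrite -sum1_card !big_distrr !big_distrl /= -!big_split /=.
by apply: eq_bigr => x _; lia.
Qed.

Theorem theorem3 (T1 T2 : finType) (e1 : rel T1) (e2 : rel T2) :
  simple_graph e1 -> simple_graph e2 ->
  connected_graph e1 -> connected_graph e2 ->
  let n1 := #|T1| in let n2 := #|T2| in
  let m1 := #|edges e1| in let m2 := #|edges e2| in
  Findex (@rjoin_adj T1 T2 e1 e2) =
    8 * Findex e1 + Findex e2 + 12 * n2 * M1 e1 + 3 * n1 * M1 e2
    + 12 * m1 * n2 ^ 2 + 6 * m2 * n1 ^ 2 + n1 * n2 * (n1 ^ 2 + n2 ^ 2) + 8 * m1.
Proof.
move=> simple_e1 simple_e2 _ _ n1 n2 m1 m2.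
rewrite /Findex !big_sumType /=.
under eq_bigr => x _ do rewrite deg_rjoin_vertex1 //.
under [X in _ + X + _]eq_bigr => A _ do rewrite deg_rjoin_subdivision //.
under [X in _ + X]eq_bigr => y _ do rewrite deg_rjoin_vertex2 -[deg e2 y]mul1n.
rewrite !sum_affine_cube sum_nat_const card_sig !handshake //.
have -> : #|[pred A in edges e1]| = m1 by apply: eq_card.
rewrite -/n1 -/n2 -/m2 -/(Findex e1) -/(Findex e2) -/(M1 e1) -/(M1 e2).
move: (Findex e1) (Findex e2) (M1 e1) (M1 e2) n1 n2 m1 m2 => *; lia.
Qed.
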